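(* Let $k$ be an $\mathbf{F}_p$-algebra, $m\in\mathbf{N}\cup\{\infty\}$, and $A:=k[[\pi]]/(\pi^{m+1})$. The function $\phi:A\to\operatorname{HS}^m(k)[[\pi]]/(\pi^{m+1})$ defined by $$\phi\Big(\sum_{i=0}^ma_i\pi^i\Big):=\sum_{n=0}^m\sum_{i=0}^nd^{[n-i]}a_i\,\pi^n\qquad(a_i\in k)$$ is a ring homomorphism.
   Context: For a ring $R$ and $m\in\mathbf{N}\cup\{\infty\}$, $\operatorname{HS}^m(R):=\mathbf{Z}[d^{[n]}a\mid a\in R,0\le n\le m]/\sim$, where $\sim$ is generated by the relations $d^{[n]}(a+b)=d^{[n]}a+d^{[n]}b$, $d^{[n]}(ab)=\sum_{i+j=n}d^{[i]}a\,d^{[j]}b$, and $d^{[0]}1=1$. Here $\pi^{\infty+1}:=0$, so for $m=\infty$ the rings are ordinary power series rings. *)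

From HB Require Import structures.
From mathcomp Require Import all_boot all_order all_algebra.
From mathcomp Require Import boolp.
Set Implicit Arguments. Unset Strict Implicit. Unset Printing Implicit Defensive.
Import GRing.Theory.
Local Open Scope ring_scope.

(* m in N ∪ {∞}: [Some M] is M, [None] is ∞.  [le_m m n] means n <= m. *)
Definition le_m (m : option nat) (n : nat) : bool :=
  if m is Some M then (n <= M)%N else true.

Lemma le_m0 m : le_m m 0.
Proof. by case: m. Qed.

(* The ring HS^m(R): the free commutative ring (Z-algebra) on symbols       *)
(* d^[n] a (a in R, 0 <= n <= m), modulo the ideal generated by              *)
(*   d^[n](a+b) = d^[n]a + d^[n]b,  d^[n](ab) = sum_{i+j=n} d^[i]a d^[j]b,    *)
(*   d^[0]1 = 1.                                                             *)
(* Built as formal ring terms modulo the least congruence containing the     *)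
(* commutative ring axioms and these relations.                              *)
Section HSconstruction.
Variables (m : option nat) (R : comPzRingType).

Inductive hsterm : Type :=
  | HVar (a : R) (n : nat) of le_m m n
  | HZero | HOne
  | HAdd of hsterm & hsterm
  | HOpp of hsterm
  | HMul of hsterm & hsterm.

Definition hd (a : R) (n : nat) : hsterm :=
  (if le_m m n as b return le_m m n = b -> hsterm
   then fun h => HVar a h else fun _ => HZero) erefl.

Definition hsum (s : seq hsterm) : hsterm := foldr HAdd HZero s.

Inductive hs_eq : hsterm -> hsterm -> Prop :=
  | hs_refl t : hs_eq t t
  | hs_sym t u : hs_eq t u -> hs_eq u t
  | hs_trans t u v : hs_eq t u -> hs_eq u v -> hs_eq t v
  | hs_add_cong t1 t2 u1 u2 :
      hs_eq t1 u1 -> hs_eq t2 u2 -> hs_eq (HAdd t1 t2) (HAdd u1 u2)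
  | hs_opp_cong t u : hs_eq t u -> hs_eq (HOpp t) (HOpp u)
  | hs_mul_cong t1 t2 u1 u2 :
      hs_eq t1 u1 -> hs_eq t2 u2 -> hs_eq (HMul t1 t2) (HMul u1 u2)
  | hs_addA x y z : hs_eq (HAdd x (HAdd y z)) (HAdd (HAdd x y) z)
  | hs_addC x y : hs_eq (HAdd x y) (HAdd y x)
  | hs_add0 x : hs_eq (HAdd HZero x) x
  | hs_addN x : hs_eq (HAdd (HOpp x) x) HZero
  | hs_mulA x y z : hs_eq (HMul x (HMul y z)) (HMul (HMul x y) z)
  | hs_mulC x y : hs_eq (HMul x y) (HMul y x)
  | hs_mul1 x : hs_eq (HMul HOne x) x
  | hs_mulDl x y z : hs_eq (HMul (HAdd x y) z) (HAdd (HMul x z) (HMul y z))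
  | hs_d_add a b n : le_m m n -> hs_eq (hd (a + b) n) (HAdd (hd a n) (hd b n))
  | hs_d_mul a b n : le_m m n ->
      hs_eq (hd (a * b) n)
            (hsum [seq HMul (hd a i) (hd b (n - i)) | i <- iota 0 n.+1])
  | hs_d_one : hs_eq (hd 1 0) HOne.

Definition HS : Type := {P : hsterm -> Prop | exists t, P = hs_eq t}.

HB.instance Definition _ := gen_eqMixin HS.
HB.instance Definition _ := gen_choiceMixin HS.

Definition hcls (t : hsterm) : HS := exist _ (hs_eq t) (ex_intro _ t erefl).
Definition hrepr (x : HS) : hsterm := sval (cid (proj2_sig x)).

Lemma hreprK x : hcls (hrepr x) = x.
Proof.
case: x => P HP; rewrite /hrepr /hcls /=.
case: (cid HP) => t /= Pt; subst P.
by congr exist; apply: Prop_irrelevance.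
Qed.

Lemma hcls_surj x : exists t, x = hcls t.
Proof. by exists (hrepr x); rewrite hreprK. Qed.

Lemma hsig_eq (P Q : hsterm -> Prop) hp hq :
  P = Q -> exist (fun P => exists t, P = hs_eq t) P hp = exist _ Q hq.
Proof. by move=> E; subst Q; congr exist; apply: Prop_irrelevance. Qed.

Lemma hcls_eq t u : hs_eq t u -> hcls t = hcls u.
Proof.
move=> tu; rewrite /hcls.
have E : hs_eq t = hs_eq u.
  apply: funext => v; apply: propext; split => h.
    exact: hs_trans (hs_sym tu) h.
  exact: hs_trans tu h.
by apply: hsig_eq.
Qed.

Lemma hrepr_cls t : hs_eq (hrepr (hcls t)) t.
Proof.
rewrite /hrepr /=; case: cid => u /= Hu.
have : hs_eq t t by constructor.
by rewrite Hu.
Qed.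

Fact hadd_key : unit. Proof. exact: tt. Qed.
Definition hadd := locked_with hadd_key (fun x y => hcls (HAdd (hrepr x) (hrepr y))).
Fact hopp_key : unit. Proof. exact: tt. Qed.
Definition hopp := locked_with hopp_key (fun x => hcls (HOpp (hrepr x))).
Fact hmul_key : unit. Proof. exact: tt. Qed.
Definition hmul := locked_with hmul_key (fun x y => hcls (HMul (hrepr x) (hrepr y))).
Definition hzero := hcls HZero.
Definition hone := hcls HOne.

Lemma hadd_cls t u : hadd (hcls t) (hcls u) = hcls (HAdd t u).
Proof. by rewrite /hadd locked_withE; apply: hcls_eq; apply: hs_add_cong; apply: hrepr_cls. Qed.
Lemma hopp_cls t : hopp (hcls t) = hcls (HOpp t).
Proof. by rewrite /hopp locked_withE; apply: hcls_eq; apply: hs_opp_cong; apply: hrepr_cls. Qed.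
Lemma hmul_cls t u : hmul (hcls t) (hcls u) = hcls (HMul t u).
Proof. by rewrite /hmul locked_withE; apply: hcls_eq; apply: hs_mul_cong; apply: hrepr_cls. Qed.

Ltac hs_solve :=
  repeat (let x := fresh "x" in move=> x; have [? ->] := hcls_surj x);
  rewrite /hzero /hone;
  repeat (rewrite hopp_cls || rewrite hadd_cls || rewrite hmul_cls);
  apply: hcls_eq;
  first [ exact: hs_addA | exact: hs_addC | exact: hs_add0 | exact: hs_addN
        | exact: hs_mulA | exact: hs_mulC | exact: hs_mul1 | exact: hs_mulDl ].

Lemma haddA : associative hadd. Proof. by hs_solve. Qed.
Lemma haddC : commutative hadd. Proof. by hs_solve. Qed.
Lemma hadd0 : left_id hzero hadd. Proof. by hs_solve. Qed.
Lemma haddN : left_inverse hzero hopp hadd. Proof. by hs_solve. Qed.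

HB.instance Definition _ := GRing.isZmodule.Build HS haddA haddC hadd0 haddN.

Lemma hmulA : associative hmul. Proof. by hs_solve. Qed.
Lemma hmulC : commutative hmul. Proof. by hs_solve. Qed.
Lemma hmul1 : left_id hone hmul. Proof. by hs_solve. Qed.
Lemma hmulDl : left_distributive hmul hadd. Proof. by hs_solve. Qed.

HB.instance Definition _ := GRing.Zmodule_isComPzRing.Build HS hmulA hmulC hmul1 hmulDl.

Definition dHS (a : R) (n : nat) : HS := hcls (hd a n).

End HSconstruction.

(* Truncated power series S[[pi]]/(pi^(m+1)), m in N ∪ {∞}: an element is    *)
(* represented by its coefficient sequence nat -> S, two sequences being     *)
(* equal when their coefficients of index n <= m agree (pi^(∞+1) = 0).       *)
Section TruncSeries.
Variable S : comPzRingType.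
Definition ps_add (f g : nat -> S) : nat -> S := fun n => f n + g n.
Definition ps_mul (f g : nat -> S) : nat -> S :=
  fun n => \sum_(i < n.+1) f i * g (n - i)%N.
Definition ps_one : nat -> S := fun n => (n == 0%N)%:R.
Definition eq_upto (m : option nat) (f g : nat -> S) : Prop :=
  forall n, le_m m n -> f n = g n.
End TruncSeries.
Arguments ps_one {S}.

(* f, given on representatives, is a well-defined ring homomorphism         *)
(* R[[pi]]/(pi^(m+1)) -> S[[pi]]/(pi^(m+1)).                                 *)
Definition trunc_ring_hom (m : option nat) (R S : comPzRingType)
    (f : (nat -> R) -> (nat -> S)) : Prop :=
  [/\ forall a b, eq_upto m a b -> eq_upto m (f a) (f b),
      forall a b, eq_upto m (f (ps_add a b)) (ps_add (f a) (f b)),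
      forall a b, eq_upto m (f (ps_mul a b)) (ps_mul (f a) (f b)) &
      eq_upto m (f ps_one) ps_one].

Definition phi (m : option nat) (k : comPzRingType) (a : nat -> k)
  : nat -> HS m k :=
  fun n => \sum_(i < n.+1) dHS m (a i) (n - i)%N.

(* Both sides of phi(ab) = phi(a) phi(b) are biadditive in (a, b), and their
   n-th coefficients only involve the coefficients of a and b of index <= n, so
   it suffices to check the identity on monomials c pi^i and d pi^j.  As
   phi(c pi^i) = pi^i * sum_n d^[n]c pi^n, this is the multiplicativity of the
   Hasse-Schmidt series sum_n d^[n] pi^n, i.e. the defining relation
   d^[n](cd) = sum_(i+j=n) d^[i]c d^[j]d. *)

From mathcomp Require Import all_boot all_order all_algebra zify.
From mathcomp Require Import boolp.
Set Implicit Arguments.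
Unset Strict Implicit.
Unset Printing Implicit Defensive.
Import GRing.Theory.
Local Open Scope ring_scope.

Lemma le_m_trans m n l : le_m m n -> (l <= n)%N -> le_m m l.
Proof. by case: m => //= M le_nM le_ln; apply: leq_trans le_ln le_nM. Qed.

Section TruncatedSeries.
Variable S : comPzRingType.

Definition ps_monomial (c : S) (i : nat) : nat -> S :=
  fun n => if n == i then c else 0.

Definition ps_shift (i : nat) (f : nat -> S) : nat -> S :=
  fun n => if (i <= n)%N then f (n - i)%N else 0.

Lemma ps_one_monomial : ps_one = ps_monomial 1 0.
Proof. by apply: funext => -[|n]. Qed.

Lemma eq_ps_mul (a a' b b' : nat -> S) n :
  (forall l, (l <= n)%N -> a l = a' l) -> (forall l, (l <= n)%N -> b l = b' l) ->
  ps_mul a b n = ps_mul a' b' n.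
Proof.
move=> eq_a eq_b; apply: eq_bigr => -[i /= lt_in].
by rewrite eq_a ?eq_b ?leq_subr // -ltnS.
Qed.

Lemma ps_mul_suml K (F : 'I_K -> nat -> S) g n :
  ps_mul (fun l => \sum_(i < K) F i l) g n = \sum_(i < K) ps_mul (F i) g n.
Proof. by rewrite /ps_mul exchange_big; apply: eq_bigr => l _; rewrite mulr_suml. Qed.

Lemma ps_mul_sumr K (F : 'I_K -> nat -> S) g n :
  ps_mul g (fun l => \sum_(i < K) F i l) n = \sum_(i < K) ps_mul g (F i) n.
Proof. by rewrite /ps_mul exchange_big; apply: eq_bigr => l _; rewrite mulr_sumr. Qed.

Lemma monomial_expansion (a : nat -> S) N n : (n <= N)%N ->
  a n = \sum_(i < N.+1) ps_monomial (a i) i n.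
Proof.
move=> le_nN; rewrite /ps_monomial.
under eq_bigr do rewrite eq_sym.
by rewrite -big_mkcond (big_ord1_eq _ a) ltnS le_nN.
Qed.

Lemma ps_mul_monomial c d i j :
  ps_mul (ps_monomial c i) (ps_monomial d j) = ps_monomial (c * d) (i + j).
Proof.
apply: funext => n; rewrite /ps_mul /ps_monomial.
under eq_bigr do rewrite (fun_if (fun x => x * _)) mul0r.
rewrite -big_mkcond (big_ord1_eq _ (fun l => c * (if (n - l)%N == j then d else 0))).
rewrite ltnS; case: leqP => [le_in|lt_ni]; last by case: eqP => //; lia.
have -> : ((n - i)%N == j) = (n == i + j)%N by apply/eqP/eqP; lia.
by case: eqP; rewrite ?mulr0.
Qed.

Lemma ps_mul_shift i j (f g : nat -> S) :
  ps_mul (ps_shift i f) (ps_shift j g) = ps_shift (i + j) (ps_mul f g).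
Proof.
apply: funext => n; rewrite /ps_mul /ps_shift.
case: leqP => [le_ijn|lt_nij]; last first.
  apply: big1 => -[l /= lt_ln] _; case: leqP => [le_il|_]; last exact: mul0r.
  by case: leqP => [?|_]; [lia | exact: mulr0].
under eq_bigr do rewrite (fun_if (fun x => x * _)) mul0r.
(* reindex the nonzero terms by l = u + i *)
pose F l := f (l - i)%N * (if (j <= n - l)%N then g (n - l - j)%N else 0).
rewrite -big_mkcond /= -(big_geq_mkord i n.+1 xpredT F) -{1}[i]add0n big_addn big_mkord.
rewrite (big_ord_widen _ (fun u => f u * g (n - (i + j) - u)%N)
                      (_ : (n - (i + j)).+1 <= n.+1 - i)%N); last by lia.
rewrite [RHS]big_mkcond; apply: eq_bigr => -[u /= lt_u] _.
rewrite /F addnK ltnS; have [le_uL|lt_Lu] := leqP u (n - (i + j)).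
  have -> : (j <= n - (u + i))%N by lia.
  by have -> : (n - (u + i) - j = n - (i + j) - u)%N by lia.
by rewrite ifF ?mulr0 //; apply/negbTE; rewrite -ltnNge; lia.
Qed.

End TruncatedSeries.

Definition causal (R S : Type) (f : (nat -> R) -> nat -> S) : Prop :=
  forall a b n, (forall l, (l <= n)%N -> a l = b l) -> f a n = f b n.

Lemma multiplicative_from_monomials (R S : comPzRingType) (m : option nat)
    (f : (nat -> R) -> nat -> S) :
  causal f ->
  (forall K F n, f (fun l => \sum_(i < K) F i l) n = \sum_(i < K) f (F i) n) ->
  (forall c d i j n, le_m m n ->
     f (ps_monomial (c * d) (i + j)) n =
     ps_mul (f (ps_monomial c i)) (f (ps_monomial d j)) n) ->
  forall a b, eq_upto m (f (ps_mul a b)) (ps_mul (f a) (f b)).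
Proof.
move=> f_causal f_sum f_monomialM a b n in_n.
pose A l := \sum_(i < n.+1) ps_monomial (a i) i l.
pose B l := \sum_(j < n.+1) ps_monomial (b j) j l.
have eq_a l : (l <= n)%N -> a l = A l by exact: monomial_expansion.
have eq_b l : (l <= n)%N -> b l = B l by exact: monomial_expansion.
have -> : f (ps_mul a b) n = f (ps_mul A B) n.
  apply: f_causal => l le_ln; apply: eq_ps_mul => l' le_l'l.
    by apply: eq_a; apply: leq_trans le_ln.
  by apply: eq_b; apply: leq_trans le_ln.
have -> : ps_mul (f a) (f b) n = ps_mul (f A) (f B) n.
  by apply: eq_ps_mul => l le_ln; apply: f_causal => l' le_l'l;
    [apply: eq_a | apply: eq_b]; apply: leq_trans le_ln.
have -> : ps_mul A B = fun l => \sum_(i < n.+1) \sum_(j < n.+1)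
                                  ps_monomial (a i * b j) (i + j) l.
  apply: funext => l; rewrite /A ps_mul_suml; apply: eq_bigr => i _.
  by rewrite /B ps_mul_sumr; apply: eq_bigr => j _; rewrite ps_mul_monomial.
have sumE (F : 'I_n.+1 -> nat -> R) :
    f (fun l => \sum_(i < n.+1) F i l) = fun l => \sum_(i < n.+1) f (F i) l.
  by apply: funext => l; apply: f_sum.
rewrite f_sum !sumE ps_mul_suml; apply: eq_bigr => i _.
by rewrite sumE ps_mul_sumr; apply: eq_bigr => j _; apply: f_monomialM.
Qed.

Section HasseSchmidt.
Variables (m : option nat) (k : comPzRingType).
Local Notation d := (dHS m).

Lemma dHS_out (a : k) n : ~~ le_m m n -> d a n = 0.
Proof.
rewrite /dHS /hd => /negbTE out_n.
by move: (erefl (le_m m n)); rewrite {2 3}out_n.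
Qed.

Lemma dHS_add (a b : k) n : d (a + b) n = d a n + d b n.
Proof.
have [in_n|out_n] := boolP (le_m m n); last by rewrite !dHS_out ?addr0.
by rewrite /dHS (hcls_eq (hs_d_add a b in_n)) -hadd_cls.
Qed.

Lemma dHS0 n : d (0 : k) n = 0.
Proof. by apply: (addrI (d 0 n)); rewrite addr0 -dHS_add addr0. Qed.

Lemma dHS_sum K (F : 'I_K -> k) n :
  d (\sum_(i < K) F i) n = \sum_(i < K) d (F i) n.
Proof.
by apply: (big_morph (fun x => d x n)); [move=> x y; apply: dHS_add | apply: dHS0].
Qed.

Lemma hcls_hsum (s : seq (hsterm m k)) : hcls (hsum s) = \sum_(t <- s) hcls t.
Proof. by elim: s => [|t s IH]; rewrite ?big_nil // big_cons -IH -hadd_cls. Qed.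

Lemma dHS_mul (a b : k) n : le_m m n -> d (a * b) n = ps_mul (d a) (d b) n.
Proof.
move=> in_n; rewrite /dHS (hcls_eq (hs_d_mul a b in_n)) hcls_hsum big_map.
have -> : iota 0 n.+1 = index_iota 0 n.+1 by rewrite /index_iota subn0.
rewrite big_mkord.
by apply: eq_bigr => i _; rewrite -hmul_cls.
Qed.

Lemma dHS1 n : le_m m n -> d (1 : k) n = ps_one n.
Proof.
have d10 : d (1 : k) 0 = 1 by rewrite /dHS (hcls_eq (hs_d_one m k)).
elim/ltn_ind: n => -[_ _|n IH in_n]; first exact: d10.
(* d^[n+1](1 * 1) = 2 d^[n+1]1 + (middle terms, zero by induction) *)
have := dHS_mul 1 1 in_n; rewrite mulr1 /ps_mul big_ord_recl big_ord_recr /=.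
rewrite d10 mul1r subn0 subnn d10 mulr1 big1 ?add0r => [E|i _]; last first.
  rewrite /bump leq0n add1n IH ?mul0r //; first by rewrite ltnS ltn_ord.
  by apply: le_m_trans in_n _; rewrite ltnS ltnW.
rewrite /bump leq0n add1n in E.
by apply: (addrI (d 1 n.+1)); rewrite -E /ps_one /= mulr0n addr0.
Qed.

End HasseSchmidt.

Section Phi.
Variables (m : option nat) (k : comPzRingType).
Local Notation phi := (@phi m k).

Lemma phi_causal : causal phi.
Proof.
move=> a b n eq_ab; apply: eq_bigr => -[i /= lt_in] _.
by rewrite eq_ab // -ltnS.
Qed.

Lemma phi_add (a b : nat -> k) n : phi (ps_add a b) n = phi a n + phi b n.
Proof. by rewrite -big_split; apply: eq_bigr => i _; apply: dHS_add. Qed.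

Lemma phi_sum K (F : 'I_K -> nat -> k) n :
  phi (fun l => \sum_(i < K) F i l) n = \sum_(i < K) phi (F i) n.
Proof. by rewrite exchange_big; apply: eq_bigr => l _; apply: dHS_sum. Qed.

Lemma phi_monomial (c : k) i : phi (ps_monomial c i) = ps_shift i (dHS m c).
Proof.
apply: funext => n; rewrite /phi /ps_monomial /ps_shift.
under eq_bigr do rewrite (fun_if (fun x : k => dHS m x _)) dHS0.
by rewrite -big_mkcond (big_ord1_eq _ (fun l => dHS m c (n - l))) ltnS.
Qed.

Lemma phi_monomialM (c d : k) i j n : le_m m n ->
  phi (ps_monomial (c * d) (i + j)) n =
  ps_mul (phi (ps_monomial c i)) (phi (ps_monomial d j)) n.
Proof.
move=> in_n; rewrite !phi_monomial ps_mul_shift /ps_shift.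
case: leqP => // le_ijn; apply: dHS_mul.
by apply: le_m_trans in_n _; apply: leq_subr.
Qed.

End Phi.

Theorem proposition6p4 (p : nat) (k : comPzRingType) (m : option nat) :
  prime p -> (p%:R : k) = 0 ->
  trunc_ring_hom m (phi m (k:=k)).
Proof.
move=> _ _; split.
- move=> a b eq_ab n in_n; apply: phi_causal => l le_ln.
  exact/eq_ab/(le_m_trans in_n).
- by move=> a b n _; apply: phi_add.
- exact: multiplicative_from_monomials (@phi_causal m k) (@phi_sum m k)
    (@phi_monomialM m k).
- move=> n in_n; rewrite ps_one_monomial phi_monomial /ps_shift subn0.
  exact: dHS1.
Qed.
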